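(* Let $\Sigma=\{a,b,e\}$ and let $L_1$ be the language of words $w\in\Sigma^*$ such that the word obtained from $w$ by deleting all occurrences of $e$ belongs to $b^+a$. Assuming the prefix-$U_1$ hypothesis, $L_1$ is not tractable.
   Context: For $w=a_1\cdots a_n$, an $L$-infix is a pair $[i,j]$ with $1\le i\le j\le n$ and $a_i\cdots a_j\in L$. $L$ is tractable if there is a data structure, built on an input word $w$, supporting letter substitution updates (replace the $i$-th letter by a given letter) and enumeration queries (output every $L$-infix of the current word exactly once, any order), and a constant $B$ depending only on $L$ such that for every $w$: each update takes at most $B$ steps; during an enumeration query the next $L$-infix (or the conclusion that none remain) is produced within $B$ steps; an enumeration query uses at most $B$ additional memory cells and treats previously existing memory as read-only; building takes at most $B|w|$ steps and memory never exceeds $B|w|$ cells. Model: unit-cost RAM with cell size logarithmic in $|w|$. The prefix-$U_1$ problem asks, for $n\in\mathbb{N}$, for a data structure maintaining a set $S\subseteq\{1,\dots,n\}$ supporting, on input $i\le n$: (1) test whether $i\in S$; (2) insert $i$ into $S$; (3) remove $i$ from $S$; (4) return yes iff $i\le\min S$. The prefix-$U_1$ hypothesis states that no data structure performs all these operations in time independent of $n$ in the unit-cost RAM model with logarithmic cell size. *)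

From mathcomp Require Import all_boot.
Set Implicit Arguments. Unset Strict Implicit. Unset Printing Implicit Defensive.

Inductive letter := La | Lb | Le.

Definition code (x : letter) : nat :=
  match x with La => 1 | Lb => 2 | Le => 3 end.

Definition not_e (x : letter) : bool := if x is Le then false else true.

Definition L1 (w : seq letter) : Prop :=
  exists k, 0 < k /\ filter not_e w = rcons (nseq k Lb) La.

(* the infix a_i ... a_j (positions 1-based) *)
Definition infix (w : seq letter) (i j : nat) : seq letter :=
  take (j - i + 1) (drop (i - 1) w).

(* Unit-cost RAM with logarithmic cell size                            *)
(* Constant-index registers R (reset to 0 at the start of every        *)
(* operation) and an indirectly addressed global memory G that          *)
(* persists between operations.                                         *)
Inductive instr :=
| IConst of nat & nat
| IArg   of nat & nat
| IAdd   of nat & nat & nat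
| ISub   of nat & nat & nat    (* R[r] := R[s] - R[t] (truncated)    *)
| IMul   of nat & nat & nat
| IDiv   of nat & nat & nat    (* R[r] := R[s] / R[t] (0 if R[t]=0)  *)
| ILoad  of nat & nat
| IStore of nat & nat
| IRead  of nat & nat
| IJz    of nat & nat
| IJmp   of nat
| IOut   of nat & nat
| IHalt.

Definition program := seq instr.

Record env := Env {
  e_args  : seq nat;
  e_input : option (seq nat);   (* read-only input word (letter codes) *)
  e_store : bool;
  e_out   : bool;
  e_W     : nat;                (* all cell values must be < e_W        *)
  e_M     : nat                 (* all global addresses must be < e_M   *)
}.

Record config := Cfg { pc : nat; regs : nat -> nat; glob : nat -> nat }.

Definition upd (f : nat -> nat) (r v : nat) : nat -> nat :=
  fun x => if x == r then v else f x.

Inductive sres :=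
| Stuck
| Halted of config
| Next of config & option (nat * nat).

Definition step (E : env) (p : program) (c : config) : sres :=
  let R := regs c in let G := glob c in let pc' := (pc c).+1 in
  let setr r v := if v < e_W E then Next (Cfg pc' (upd R r v) G) None else Stuck in
  if pc c < size p then
    match nth IHalt p (pc c) with
    | IConst r k => setr r k
    | IArg r k => setr r (nth 0 (e_args E) k)
    | IAdd r s t => setr r (R s + R t)
    | ISub r s t => setr r (R s - R t)
    | IMul r s t => setr r (R s * R t)
    | IDiv r s t => setr r (if R t == 0 then 0 else R s %/ R t)
    | ILoad r s => if R s < e_M E then setr r (G (R s)) else Stuck
    | IStore r s =>
        if e_store E && (R r < e_M E) then Next (Cfg pc' R (upd G (R r) (R s))) None
        else Stuck
    | IRead r s =>
        match e_input E with
        | None => Stuck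
        | Some w => let j := R s in
                    setr r (if (0 < j) && (j <= size w) then nth 0 w j.-1 else 0)
        end
    | IJz r l => Next (Cfg (if R r == 0 then l else pc') R G) None
    | IJmp l => Next (Cfg l R G) None
    | IOut r s => if e_out E then Next (Cfg pc' R G) (Some (R r, R s)) else Stuck
    | IHalt => Halted c
    end
  else Halted c.

Definition start (g : nat -> nat) : config := Cfg 0 (fun _ => 0) g.
Definition zero_mem : nat -> nat := fun _ => 0.

(* run p for at most [fuel] steps (the final halting step included);  *)
Fixpoint run (E : env) (p : program) (fuel : nat) (c : config) : option config :=
  match fuel with
  | 0 => None
  | f.+1 =>
    match step E p c with
    | Stuck => None
    | Halted c' => Some c'
    | Next c' _ => run E p f c'
    end
  end.

Definition halts (E : env) (p : program) (c c' : config) : Prop :=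
  exists fuel, run E p fuel c = Some c'.

(* one delay segment: within d steps either halt (Some None) or produce *)
(* an output (Some (Some (o, c'))).                                     *)
Fixpoint seg (E : env) (p : program) (d : nat) (c : config)
  : option (option ((nat * nat) * config)) :=
  match d with
  | 0 => None
  | d'.+1 =>
    match step E p c with
    | Stuck => None
    | Halted _ => Some None
    | Next c' None => seg E p d' c'
    | Next c' (Some o) => Some (Some (o, c'))
    end
  end.

(* enumeration with delay at most B between consecutive outputs, before *)
(* the first one, and between the last one and termination; k bounds    *)
(* the number of segments.                                              *)
Fixpoint enum (E : env) (p : program) (B k : nat) (c : config)
  : option (seq (nat * nat)) :=
  match k with
  | 0 => None
  | k'.+1 =>
    match seg E p B c with
    | None => None
    | Some None => Some [::]
    | Some (Some (o, c')) => omap (cons o) (enum E p B k' c')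
    end
  end.

Section Tractable.
Variables (L : seq letter -> Prop) (upd_p enm_p : program) (B c : nat).

(* word size: values < (n+2)^c, i.e. O(log n)-bit cells;               *)
Definition cellW (n : nat) : nat := (n + 2) ^ c.
Definition memM (n : nat) : nat := B * (n + 1).

Definition enum_env (n : nat) : env := Env [:: n] None false true (cellW n) (memM n).
Definition upd_env (n i : nat) (x : letter) : env :=
  Env [:: n; i; code x] None true false (cellW n) (memM n).

Definition enum_correct (w : seq letter) (g : nat -> nat) : Prop :=
  exists k outs,
    enum (enum_env (size w)) enm_p B k (start g) = Some outs /\
    uniq outs /\
    forall i j, (i, j) \in outs <->
      (1 <= i /\ i <= j /\ j <= size w /\ L (infix w i j)).

Fixpoint trace_ok (w : seq letter) (g : nat -> nat) (us : seq (nat * letter)) : Prop :=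
  enum_correct w g /\
  match us with
  | [::] => True
  | (i, x) :: us' =>
      exists cf, run (upd_env (size w) i x) upd_p B (start g) = Some cf /\
                 trace_ok (set_nth La w i.-1 x) (glob cf) us'
  end.
End Tractable.

Definition pre_env (B c : nat) (w : seq letter) : env :=
  Env [:: size w] (Some (map code w)) true false (cellW c (size w)) (memM B (size w)).

Definition tractable (L : seq letter -> Prop) : Prop :=
  exists (pre_p upd_p enm_p : program) (B c : nat),
    forall w : seq letter,
      exists cf0,
        run (pre_env B c w) pre_p (B * (size w + 1)) (start zero_mem) = Some cf0 /\
        forall us : seq (nat * letter),
          all (fun u => (0 < u.1) && (u.1 <= size w)) us ->
          trace_ok L upd_p enm_p B c w (glob cf0) us.

Inductive u1op := U1Mem of nat | U1Ins of nat | U1Rem of nat | U1Pre of nat.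

Definition u1arg (o : u1op) : nat :=
  match o with U1Mem i | U1Ins i | U1Rem i | U1Pre i => i end.

Record u1ds := U1DS {
  u1_init : program; u1_mem : program; u1_ins : program;
  u1_rem : program; u1_pre : program }.

Definition u1prog (D : u1ds) (o : u1op) : program :=
  match o with
  | U1Mem _ => u1_mem D | U1Ins _ => u1_ins D
  | U1Rem _ => u1_rem D | U1Pre _ => u1_pre D
  end.

Definition u1env (c n i : nat) : env :=
  Env [:: n; i] None true false ((n + 2) ^ c) ((n + 2) ^ c).

Definition answer (cf : config) : bool := regs cf 0 != 0.

(* S is represented by its characteristic function; "i <= min S" means *)
(* every element of S is >= i (true when S is empty).                  *)
Fixpoint u1_trace (D : u1ds) (c B n : nat) (S : nat -> bool) (g : nat -> nat)
    (ops : seq u1op) : Prop :=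
  match ops with
  | [::] => True
  | o :: ops' =>
      exists cf, run (u1env c n (u1arg o)) (u1prog D o) B (start g) = Some cf /\
      match o with
      | U1Mem i => answer cf = S i /\ u1_trace D c B n S (glob cf) ops'
      | U1Ins i => u1_trace D c B n (fun x => (x == i) || S x) (glob cf) ops'
      | U1Rem i => u1_trace D c B n (fun x => (x != i) && S x) (glob cf) ops'
      | U1Pre i => (answer cf <-> forall x, 1 <= x <= n -> S x -> i <= x) /\
                   u1_trace D c B n S (glob cf) ops'
      end
  end.

Definition u1_solves (D : u1ds) (c B : nat) : Prop :=
  forall n, exists cf0,
    halts (u1env c n 0) (u1_init D) (start zero_mem) cf0 /\
    forall ops : seq u1op,
      all (fun o => (1 <= u1arg o) && (u1arg o <= n)) ops ->
      u1_trace D c B n (fun _ => false) (glob cf0) ops.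

Definition prefixU1_hypothesis : Prop :=
  ~ exists (D : u1ds) (c B : nat), u1_solves D c B.

(* Reduction from prefix-U1. A set S of {1..n} is encoded by the word w_S of
   length 2n whose letter at position 2x is b if x is in S and e otherwise, all
   other letters being e; the membership bits of S are also kept in a table
   beyond the memory of the L1 structure.  Insertion and removal change position
   2i of w_S and the table, membership reads the table.  For the prefix query,
   position 2i-1 is set to a: this a being the only one of the word, the word has
   an L1-infix iff some b precedes it, i.e. iff S has an element smaller than i,
   which the enumeration decides by either halting or producing its first output
   within B steps; the a is then erased again.  The programs of the L1 structure
   are run inside the U1 programs by a compiler placing each instruction in a
   block of fixed size, so every U1 operation takes a number of steps depending
   only on the L1 structure, and all values stay below (n+2)^(2c+B+3). *)

From HB Require Import structures.
From mathcomp Require Import all_boot zify.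
Set Implicit Arguments. Unset Strict Implicit. Unset Printing Implicit Defensive.

Definition letter_eq (x y : letter) := code x == code y.

Lemma letter_eqP : Equality.axiom letter_eq.
Proof. by case; case; constructor. Qed.

HB.instance Definition _ := hasDecEq.Build letter letter_eqP.

(** * L1-infixes around a unique a *)

Lemma cat_sep_eq (T : eqType) (x : T) u v u' v' :
  x \notin u -> x \notin v -> u ++ x :: v = u' ++ x :: v' -> u' = u.
Proof.
move=> xu xv e.
have xu' : x \notin u'.
  have := congr1 (count_mem x) e; rewrite !count_cat /= eqxx.
  by rewrite (count_memPn xu) (count_memPn xv) -has_pred1 has_count; lia.
have := congr1 (index x) e; rewrite !index_cat (negbTE xu) (negbTE xu') /= eqxx !addn0.
move=> eq_size; have := congr1 (take (size u)) e.
by rewrite take_size_cat // eq_size take_size_cat.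
Qed.

Lemma infix_split (w : seq letter) p q : 1 <= p -> p <= q -> q <= size w ->
  w = take p.-1 w ++ infix w p q ++ drop q w.
Proof.
move=> p1 pq qw; rewrite /infix (_ : p - 1 = p.-1); last lia.
rewrite -[in LHS](cat_take_drop p.-1 w) -[in LHS](cat_take_drop (q - p + 1) (drop p.-1 w)).
by rewrite drop_drop (_ : q - p + 1 + p.-1 = q) //; lia.
Qed.

Lemma L1_split s : L1 s -> exists s1 s2, s = s1 ++ La :: s2 /\ Lb \in s1.
Proof.
case=> k [k_gt0 fs].
have aS : La \in s by have := mem_filter not_e La s; rewrite fs mem_rcons mem_head => /esym/andP[].
move: fs; case/splitPr: aS => s1 s2 fs; exists s1, s2; split=> //.
move: fs; rewrite filter_cat /=; case: k k_gt0 => // k _.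
case E: (filter not_e s1) => [|y ys] //= [ey _].
by have := mem_head y ys; rewrite -E ey mem_filter => /andP[].
Qed.

Lemma L1_drop_index_b u : La \notin u -> Lb \in u -> L1 (drop (index Lb u) u ++ [:: La]).
Proof.
move=> au bu; set t := drop (index Lb u) u.
have bt : Lb \in t by rewrite /t (drop_nth Le) ?index_mem // nth_index // mem_head.
have at' : La \notin t by apply: contra au; exact: mem_drop.
exists (size (filter not_e t)); split.
  by rewrite size_filter -has_count; apply/hasP; exists Lb.
rewrite filter_cat cats1; congr rcons; apply/all_pred1P/allP => y.
rewrite mem_filter => /andP[]; case: y => // _ yt.
by rewrite yt in at'.
Qed.

Definition has_infix (L : seq letter -> Prop) (w : seq letter) :=
  exists i j, [/\ 1 <= i, i <= j, j <= size w & L (infix w i j)].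

Lemma L1_infix_iff u v : La \notin u -> La \notin v -> has_infix L1 (u ++ La :: v) <-> Lb \in u.
Proof.
move=> au av; split.
  case=> p [q [p1 pq qw /L1_split[s1 [s2 [es bs1]]]]].
  have := infix_split p1 pq qw; rewrite es -catA /= catA => e.
  by rewrite -(cat_sep_eq au av e) mem_cat bs1 orbT.
move=> bu; have ju : index Lb u < size u by rewrite index_mem.
exists (index Lb u).+1, (size u).+1; split; [by [] | lia | by rewrite size_cat /=; lia |].
have -> : infix (u ++ La :: v) (index Lb u).+1 (size u).+1 = drop (index Lb u) u ++ [:: La].
  rewrite /infix subSS subn1 /= drop_cat ju take_cat size_drop ltnNge leq_addr /=.
  by rewrite addKn /= take0.
exact: L1_drop_index_b.
Qed.

(** * Words encoding a set *)

Lemma set_nth_mkseq (T : Type) (x0 : T) f m k y : k < m ->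
  set_nth x0 (mkseq f m) k y = mkseq [eta f with k |-> y] m.
Proof.
move=> km; apply: (@eq_from_nth _ x0); rewrite size_set_nth !size_mkseq ?(maxn_idPr km) //.
by move=> j jm; rewrite nth_set_nth /= !nth_mkseq.
Qed.

Definition bit_letter (b : bool) : letter := if b then Lb else Le.

(* The letter at the 1-based position 2x, i.e. at index 2x-1, is b iff S x. *)
Definition set_word n (S : nat -> bool) : seq letter :=
  mkseq (fun k => if odd k then bit_letter (S k./2.+1) else Le) (2 * n).

Lemma size_set_word n S : size (set_word n S) = 2 * n.
Proof. exact: size_mkseq. Qed.

Lemma eq_set_word n S1 S2 : S1 =1 S2 -> set_word n S1 = set_word n S2.
Proof. by move=> hS; apply: eq_mkseq => k; rewrite hS. Qed.

Lemma set_word_pred0 n : set_word n (fun _ => false) = nseq (2 * n) Le.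
Proof.
apply: (@eq_from_nth _ Le); rewrite size_set_word ?size_nseq // => k kn.
by rewrite nth_mkseq // nth_nseq kn; case: odd.
Qed.

Lemma La_notin_set_word n S : La \notin set_word n S.
Proof. by apply/mapP=> -[k _]; case: odd => //; case: S. Qed.

Lemma eq_pred_double k i : 0 < i -> (k == (2 * i).-1) = odd k && (k./2.+1 == i).
Proof.
move=> i_gt0; rewrite -[k in LHS](odd_double_half k).
by case: (odd k) => /=; rewrite -muln2; apply/eqP/eqP; lia.
Qed.

Lemma set_word_update n S i b : 0 < i <= n ->
  set_nth La (set_word n S) (2 * i).-1 (bit_letter b) = set_word n [eta S with i |-> b].
Proof.
move=> /andP[i_gt0 le_in]; rewrite set_nth_mkseq; last lia.
apply: eq_mkseq => k /=; rewrite eq_pred_double //.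
by case: (odd k) => //=; case: ifP.
Qed.

Lemma set_word_probe_restore n S i : 0 < i <= n ->
  set_nth La (set_nth La (set_word n S) (2 * i).-2 La) (2 * i).-2 Le = set_word n S.
Proof.
move=> /andP[i_gt0 le_in]; rewrite !set_nth_mkseq ?size_mkseq; try lia.
apply: eq_mkseq => k /=; case: eqP => // ->.
by rewrite (_ : (2 * i).-2 = (i.-1).*2) ?odd_double //; lia.
Qed.

Lemma set_word_probeE n S i : 0 < i <= n ->
  set_nth La (set_word n S) (2 * i).-2 La =
  take (2 * i).-2 (set_word n S) ++ La :: drop (2 * i).-1 (set_word n S).
Proof.
move=> /andP[i_gt0 le_in]; rewrite set_nthE size_set_word ifT; last lia.
by rewrite (_ : ((2 * i).-2).+1 = (2 * i).-1) //; lia.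
Qed.

Lemma b_in_set_word_prefix n S i : 0 < i <= n ->
  Lb \in take (2 * i).-2 (set_word n S) <-> exists2 x, 0 < x < i & S x.
Proof.
move=> /andP[i_gt0 le_in].
rewrite /set_word /mkseq -map_take take_iota (minn_idPl _); last lia.
split.
  case/mapP=> k; rewrite mem_iota /=; case: ifP => // ok.
  case Sk: S => // kl _; exists k./2.+1 => //.
  by move: (odd_double_half k) kl; rewrite ok -muln2; lia.
case=> x /andP[x_gt0 lt_xi] Sx; apply/mapP; exists (2 * x).-1.
  by rewrite mem_iota; lia.
have := eq_pred_double (2 * x).-1 x_gt0; rewrite eqxx => /esym/andP[-> /eqP->].
by rewrite Sx.
Qed.

Lemma probe_has_infix n S i : 0 < i <= n ->
  has_infix L1 (set_nth La (set_word n S) (2 * i).-2 La) <-> exists2 x, 0 < x < i & S x.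
Proof.
move=> ilen; rewrite set_word_probeE // L1_infix_iff ?b_in_set_word_prefix //.
  exact: contra (@mem_take _ _ _ _) (La_notin_set_word n S).
exact: contra (@mem_drop _ _ _ _) (La_notin_set_word n S).
Qed.

(** * Reasoning about bounded runs *)

Fixpoint steps (E : env) (P : program) (k : nat) (c : config) : option config :=
  match k with
  | 0 => Some c
  | k'.+1 => if step E P c is Next c' _ then steps E P k' c' else None
  end.

Definition reach E P k c (Q : config -> Prop) :=
  exists j c', [/\ j <= k, steps E P j c = Some c' & Q c'].

Section Reach.
Variables (E : env) (P : program).

Lemma reach_now k c (Q : config -> Prop) : Q c -> reach E P k c Q.
Proof. by exists 0, c. Qed.

Lemma reach_mono k k' c Q : k <= k' -> reach E P k c Q -> reach E P k' c Q.
Proof. by move=> kk' [j [c' [jk ? ?]]]; exists j, c'; split=> //; apply: leq_trans kk'. Qed.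

Lemma reach_post k c (Q Q' : config -> Prop) :
  (forall c, Q c -> Q' c) -> reach E P k c Q -> reach E P k c Q'.
Proof. by move=> QQ' [j [c' [? ? /QQ'] ]]; exists j, c'. Qed.

Lemma steps_add j1 j2 c : steps E P (j1 + j2) c = obind (steps E P j2) (steps E P j1 c).
Proof. by elim: j1 c => [|j1 IH] c //=; case: (step E P c). Qed.

Lemma reach_trans k1 k2 c Q :
  reach E P k1 c (fun c' => reach E P k2 c' Q) -> reach E P (k1 + k2) c Q.
Proof.
move=> [j1 [c1 [? e1 [j2 [c2 [? e2 ?]]]]]].
by exists (j1 + j2), c2; split; [lia | rewrite steps_add e1 | ].
Qed.

Lemma reach_step k c c' o Q :
  step E P c = Next c' o -> reach E P k c' Q -> reach E P k.+1 c Q.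
Proof. by move=> e [j [c'' [? ? ?]]]; exists j.+1, c''; rewrite /= e. Qed.

Lemma run_of_reach k c (Q : config -> Prop) fuel :
  reach E P k c (fun c' => nth IHalt P (pc c') = IHalt /\ Q c') -> k < fuel ->
  exists cf, run E P fuel c = Some cf /\ Q cf.
Proof.
move=> [j [c' [jk sj [halt_c' Qc']]]] kf; exists c'; split=> //.
have jf : j < fuel by lia.
elim: j fuel c sj jf {jk kf} => [|j IH] [|f] c //=.
  by move=> [->] _; rewrite /step halt_c'; case: ifP.
by case: (step E P c) => // c1 o; exact: IH.
Qed.
End Reach.

Section Rules.
Variables (E : env) (P : program) (k : nat) (c : config) (Q : config -> Prop).
Local Notation R := (regs c).
Local Notation G := (glob c).

Lemma fetch_lt i : nth IHalt P (pc c) = i -> i <> IHalt -> pc c < size P.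
Proof. by move=> e ne; rewrite ltnNge; apply/negP=> /(nth_default IHalt); rewrite e. Qed.

Lemma reach_const r v : nth IHalt P (pc c) = IConst r v -> v < e_W E ->
  reach E P k (Cfg (pc c).+1 (upd R r v) G) Q -> reach E P k.+1 c Q.
Proof. by move=> e hv; apply: (@reach_step _ _ _ _ _ None); rewrite /step (fetch_lt e) // e /= hv. Qed.

Lemma reach_arg r j : nth IHalt P (pc c) = IArg r j -> nth 0 (e_args E) j < e_W E ->
  reach E P k (Cfg (pc c).+1 (upd R r (nth 0 (e_args E) j)) G) Q -> reach E P k.+1 c Q.
Proof. by move=> e hv; apply: (@reach_step _ _ _ _ _ None); rewrite /step (fetch_lt e) // e /= hv. Qed.

Lemma reach_add r s t : nth IHalt P (pc c) = IAdd r s t -> R s + R t < e_W E ->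
  reach E P k (Cfg (pc c).+1 (upd R r (R s + R t)) G) Q -> reach E P k.+1 c Q.
Proof. by move=> e hv; apply: (@reach_step _ _ _ _ _ None); rewrite /step (fetch_lt e) // e /= hv. Qed.

Lemma reach_sub r s t : nth IHalt P (pc c) = ISub r s t -> R s - R t < e_W E ->
  reach E P k (Cfg (pc c).+1 (upd R r (R s - R t)) G) Q -> reach E P k.+1 c Q.
Proof. by move=> e hv; apply: (@reach_step _ _ _ _ _ None); rewrite /step (fetch_lt e) // e /= hv. Qed.

Lemma reach_mul r s t : nth IHalt P (pc c) = IMul r s t -> R s * R t < e_W E ->
  reach E P k (Cfg (pc c).+1 (upd R r (R s * R t)) G) Q -> reach E P k.+1 c Q.
Proof. by move=> e hv; apply: (@reach_step _ _ _ _ _ None); rewrite /step (fetch_lt e) // e /= hv. Qed.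

Lemma reach_div r s t : nth IHalt P (pc c) = IDiv r s t ->
  (if R t == 0 then 0 else R s %/ R t) < e_W E ->
  reach E P k (Cfg (pc c).+1 (upd R r (if R t == 0 then 0 else R s %/ R t)) G) Q ->
  reach E P k.+1 c Q.
Proof. by move=> e hv; apply: (@reach_step _ _ _ _ _ None); rewrite /step (fetch_lt e) // e /= hv. Qed.

Lemma reach_load r s : nth IHalt P (pc c) = ILoad r s -> R s < e_M E -> G (R s) < e_W E ->
  reach E P k (Cfg (pc c).+1 (upd R r (G (R s))) G) Q -> reach E P k.+1 c Q.
Proof.
by move=> e hm hv; apply: (@reach_step _ _ _ _ _ None); rewrite /step (fetch_lt e) // e /= hm hv.
Qed.

Lemma reach_store r s : nth IHalt P (pc c) = IStore r s -> e_store E -> R r < e_M E ->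
  reach E P k (Cfg (pc c).+1 R (upd G (R r) (R s))) Q -> reach E P k.+1 c Q.
Proof.
by move=> e hs hm; apply: (@reach_step _ _ _ _ _ None); rewrite /step (fetch_lt e) // e /= hs hm.
Qed.

Lemma reach_jz r l : nth IHalt P (pc c) = IJz r l ->
  reach E P k (Cfg (if R r == 0 then l else (pc c).+1) R G) Q -> reach E P k.+1 c Q.
Proof. by move=> e; apply: (@reach_step _ _ _ _ _ None); rewrite /step (fetch_lt e) // e. Qed.

Lemma reach_jmp l : nth IHalt P (pc c) = IJmp l -> reach E P k (Cfg l R G) Q -> reach E P k.+1 c Q.
Proof. by move=> e; apply: (@reach_step _ _ _ _ _ None); rewrite /step (fetch_lt e) // e. Qed.
End Rules.

Definition code_at (P : program) (a : nat) (s : seq instr) :=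
  forall j, j < size s -> nth IHalt P (a + j) = nth IHalt s j.

Lemma code_at_catl P a s1 s2 : code_at P a (s1 ++ s2) -> code_at P a s1.
Proof. by move=> h j hj; rewrite h ?nth_cat ?hj // size_cat ltn_addr. Qed.

Lemma code_at_catr P a s1 s2 : code_at P a (s1 ++ s2) -> code_at P (a + size s1) s2.
Proof.
move=> h j hj; rewrite -addnA h ?nth_cat ?size_cat ?ltn_add2l //.
by rewrite ltnNge leq_addr /= addKn.
Qed.

Lemma fetch_at P a s c t : code_at P a s -> t < size s -> pc c = a + t ->
  nth IHalt P (pc c) = nth IHalt s t.
Proof. by move=> h ht ->; apply: h. Qed.

Definition clear_regs (R : nat) : seq instr := mkseq (fun r => IConst r 0) R.

Lemma clear_regs_spec E P a R c : code_at P a (clear_regs R) -> pc c = a -> 0 < e_W E ->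
  reach E P R c (fun c' => [/\ pc c' = a + R, (forall r, r < R -> regs c' r = 0),
     (forall r, R <= r -> regs c' r = regs c r) & glob c' = glob c]).
Proof.
move=> hc hpc hW.
suff /(_ R (leqnn R)) : forall j, j <= R -> reach E P j c (fun c' => [/\ pc c' = a + j,
     (forall r, r < j -> regs c' r = 0),
     (forall r, j <= r -> regs c' r = regs c r) & glob c' = glob c]) by [].
elim=> [_|j IH hj]; first by apply: reach_now; split=> //; rewrite addn0.
rewrite -addn1; apply: reach_trans; apply: reach_post (IH (ltnW hj)) => c' [h1 h2 h3 h4].
apply: (@reach_const _ _ _ _ _ j 0) => //.
  by rewrite (fetch_at hc (t := j)) ?size_mkseq ?nth_mkseq.
apply: reach_now; split=> /=; first by rewrite h1 addn1 addnS.
- by move=> r hr; rewrite /upd; case: eqP => // ne; apply: h2; lia.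
- by move=> r hr; rewrite /upd; case: eqP => [?|_]; [lia | apply: h3; lia].
- done.
Qed.

(** * Simulating a program inside another one *)

(* Instruction k of p becomes the block of blk cells at off + blk * k.  The
   registers R, R+1, R+2 hold the arguments of the simulated operation and R+3
   is scratch; jumps beyond p lead to the exit block off + blk * size p and
   outputs to F.  The only input ever simulated is e^m with m the first
   argument, so reading position j yields code Le iff 0 < j <= m. *)
Definition blk := 8.

Definition compile_instr (R off sz F k : nat) (ins : instr) : seq instr :=
  let b := off + blk * k in
  let nxt := off + blk * k.+1 in
  let tgt l := off + blk * minn l sz in
  match ins with
  | IConst r v => [:: IConst r v; IJmp nxt]
  | IArg r j => if j < 3 then [:: IConst r 0; IAdd r (R + j) r; IJmp nxt]
                else [:: IConst r 0; IJmp nxt]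
  | IAdd r s t => [:: IAdd r s t; IJmp nxt]
  | ISub r s t => [:: ISub r s t; IJmp nxt]
  | IMul r s t => [:: IMul r s t; IJmp nxt]
  | IDiv r s t => [:: IDiv r s t; IJmp nxt]
  | ILoad r s => [:: ILoad r s; IJmp nxt]
  | IStore r s => [:: IStore r s; IJmp nxt]
  | IRead r s => [:: IJz s (b + 4); ISub (R + 3) s R; IJz (R + 3) (b + 6); IJmp (b + 4);
                     IConst r 0; IJmp nxt; IConst r (code Le); IJmp nxt]
  | IJz r l => [:: IJz r (tgt l); IJmp nxt]
  | IJmp l => [:: IJmp (tgt l)]
  | IOut _ _ => [:: IJmp F]
  | IHalt => [:: IJmp (off + blk * sz)]
  end.

Definition compile_block R off sz F k ins :=
  let s := compile_instr R off sz F k ins in s ++ nseq (blk - size s) IHalt.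

Definition compile R off F (p : program) : seq instr :=
  flatten [seq compile_block R off (size p) F k (nth IHalt p k) | k <- iota 0 (size p)].

Lemma size_compile_instr R off sz F k ins : size (compile_instr R off sz F k ins) <= blk.
Proof. by case: ins => //= r j; case: ifP. Qed.

Lemma size_compile_block R off sz F k ins : size (compile_block R off sz F k ins) = blk.
Proof. by rewrite /compile_block size_cat size_nseq subnKC // size_compile_instr. Qed.

Lemma size_compile R off F p : size (compile R off F p) = blk * size p.
Proof.
rewrite /compile size_flatten /shape -map_comp.
rewrite (eq_map (fun k => size_compile_block R off (size p) F k (nth IHalt p k))).
have sumn_const (s : seq nat) : sumn [seq blk | _ <- s] = blk * size s.
  by elim: s => //= _ s ->; rewrite mulnS.
by rewrite sumn_const size_iota.
Qed.

Lemma nth_flatten_blocks (f : nat -> seq instr) a n k j :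
  (forall x, size (f x) = blk) -> k < n -> j < blk ->
  nth IHalt (flatten [seq f x | x <- iota a n]) (blk * k + j) = nth IHalt (f (a + k)) j.
Proof.
move=> size_f; elim: n a k => [|n IH] a [|k] //= kn jb.
  by rewrite nth_cat size_f muln0 jb addn0.
rewrite nth_cat size_f ltnNge (_ : blk <= blk * k.+1 + j); last by rewrite mulnS -addnA leq_addr.
by rewrite /= mulnS -addnA addKn IH // addSnnS.
Qed.

Lemma code_at_block P off R F p k : code_at P off (compile R off F p) -> k < size p ->
  code_at P (off + blk * k) (compile_instr R off (size p) F k (nth IHalt p k)).
Proof.
move=> hc hk j hj.
have hjb : j < blk by apply: leq_trans hj (size_compile_instr _ _ _ _ _ _).
rewrite -addnA hc; last by rewrite size_compile; move: hjb; rewrite /blk; lia.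
rewrite /compile nth_flatten_blocks //; last by move=> x; exact: size_compile_block.
by rewrite /compile_block nth_cat hj.
Qed.

Definition instr_reg (i : instr) : nat :=
  match i with
  | IConst r _ | IArg r _ | IJz r _ => r
  | IAdd r s t | ISub r s t | IMul r s t | IDiv r s t => maxn r (maxn s t)
  | ILoad r s | IStore r s | IRead r s | IOut r s => maxn r s
  | IJmp _ | IHalt => 0
  end.

Definition prog_regs (p : program) : nat := foldr (fun i m => maxn (instr_reg i).+1 m) 0 p.

Lemma instr_reg_lt p k : k < size p -> instr_reg (nth IHalt p k) < prog_regs p.
Proof. by elim: p k => [|i p IH] [|k] //= hk; [lia | have := IH k hk; lia]. Qed.

Local Ltac case_step p c :=
  case: ifP => _ //;
  case: (nth IHalt p (pc c)) => [r v|r j|r s t|r s t|r s t|r s t|r s|r s|r s|r l|l|r s|] /=;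
  try (case: (e_input _) => [w|] //=); repeat (case: ifP => _ //=).

Lemma step_no_out E p c c' o : e_out E = false -> step E p c = Next c' o -> o = None.
Proof. by move=> no_out; rewrite /step no_out; case_step p c; move=> e; inversion e. Qed.

Lemma step_no_store E p c c' o : e_store E = false -> step E p c = Next c' o -> glob c' = glob c.
Proof. by move=> no_store; rewrite /step no_store; case_step p c; move=> e; inversion e. Qed.

Lemma step_halted E p c c' : step E p c = Halted c' -> c' = c.
Proof. by rewrite /step; case_step p c; move=> e; inversion e. Qed.

(* The target has no input, hence the restriction on the simulated input. *)
Record simulable (Es Et : env) : Prop := Simulable {
  sim_W_le : e_W Es <= e_W Et;
  sim_W_gt0 : 0 < e_W Es;
  sim_M_le : e_M Es <= e_M Et;
  sim_store_ok : e_store Et;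
  sim_args_le : size (e_args Es) <= 3;
  sim_input_e : forall w, e_input Es = Some w -> w = nseq (nth 0 (e_args Es) 0) (code Le) }.

Lemma sim_target_W_gt0 Es Et : simulable Es Et -> 0 < e_W Et.
Proof. by case=> hW hW0 *; apply: leq_trans hW. Qed.

Section Simulation.
Variables (Es Et : env) (P p : program) (R off F : nat) (H : nat -> nat).
Hypothesis code_p : code_at P off (compile R off F p).
Hypothesis regs_p : forall k, k < size p -> instr_reg (nth IHalt p k) < R.
Hypothesis EsEt : simulable Es Et.

(* H is the part of the target memory that the simulated program cannot see. *)
Definition mem_agree (g : nat -> nat) (c2 : config) :=
  (forall x, x < e_M Es -> glob c2 x = g x) /\ (forall x, e_M Es <= x -> glob c2 x = H x).

Definition sim_rel (c1 c2 : config) :=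
  [/\ pc c2 = off + blk * minn (pc c1) (size p),
      (forall r, r < R -> regs c2 r = regs c1 r),
      (forall j, j < 3 -> regs c2 (R + j) = nth 0 (e_args Es) j),
      (forall r, regs c1 r < e_W Es) & mem_agree (glob c1) c2].

Definition exit_pc := off + blk * size p.

Definition sim_post (c2 : config) (s : sres) : Prop :=
  match s with
  | Next c1' None => reach Et P blk c2 (sim_rel c1')
  | Next c1' (Some _) => reach Et P blk c2 (fun c2' => pc c2' = F /\ mem_agree (glob c1') c2')
  | Halted c1' => reach Et P blk c2 (fun c2' => pc c2' = exit_pc /\ mem_agree (glob c1') c2')
  | Stuck => True
  end.

Section Block.
Variables c1 c2 : config.
Hypotheses (rel12 : sim_rel c1 c2) (pc1_lt : pc c1 < size p).

Lemma block_at : code_at P (pc c2) (compile_instr R off (size p) F (pc c1) (nth IHalt p (pc c1))).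
Proof. by case: rel12 => -> *; rewrite (minn_idPl (ltnW pc1_lt)); exact: code_at_block. Qed.

Lemma sim_rel_assign r v regs2 : r < R -> v < e_W Es ->
  (forall x, x < R + 3 -> regs2 x = upd (regs c2) r v x) ->
  sim_rel (Cfg (pc c1).+1 (upd (regs c1) r v) (glob c1)) (Cfg (off + blk * (pc c1).+1) regs2 (glob c2)).
Proof.
case: rel12 => _ hr ha hb hm hrR hv e2; split=> //=.
- by rewrite (minn_idPl pc1_lt).
- by move=> x hx; rewrite e2 /upd; [case: eqP => // _; exact: hr | lia].
- by move=> j hj; rewrite e2 /upd; [case: eqP => [|_]; [lia | exact: ha] | lia].
- by move=> x; rewrite /upd; case: eqP.
Qed.

Lemma sim_rel_goto l : sim_rel (Cfg l (regs c1) (glob c1))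
  (Cfg (off + blk * minn l (size p)) (regs c2) (glob c2)).
Proof. by case: rel12. Qed.

Local Ltac fetch hc t := by rewrite (fetch_at hc (t := t)) //=; lia.

Lemma sim_const r v : nth IHalt p (pc c1) = IConst r v -> sim_post c2 (step Es p c1).
Proof.
move=> e; have hc := block_at; have := regs_p pc1_lt; rewrite e /= in hc * => hr0.
rewrite /sim_post /step pc1_lt e /=; case: ifP => // hv.
apply: (reach_mono (k := 2)) => //.
apply: reach_const; [fetch hc 0 | exact: leq_trans hv (sim_W_le EsEt) |].
apply: reach_jmp; [fetch hc 1 |].
exact/reach_now/sim_rel_assign.
Qed.

Lemma sim_arg r j : nth IHalt p (pc c1) = IArg r j -> sim_post c2 (step Es p c1).
Proof.
move=> e; have hc := block_at; have := regs_p pc1_lt; rewrite e /= in hc * => hr0.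
rewrite /sim_post /step pc1_lt e /=; case: ifP => // hv.
have hvt := leq_trans hv (sim_W_le EsEt); case: rel12 => _ _ ha _ _.
case: (ltnP j 3) => hj; rewrite /= ?hj ?(ltnNge j) ?hj in hc.
  apply: (reach_mono (k := 3)) => //.
  have e1 : upd (regs c2) r 0 (R + j) = nth 0 (e_args Es) j.
    by rewrite /upd; case: eqP => [|_]; [lia | exact: ha].
  apply: reach_const; [fetch hc 0 | exact: sim_target_W_gt0 EsEt | ].
  apply: reach_add; [fetch hc 1 | by rewrite /= e1 /upd eqxx addn0 |].
  apply: reach_jmp; [fetch hc 2 |].
  apply/reach_now/sim_rel_assign => // x _ /=.
  by rewrite e1 /upd eqxx /= addn0; case: eqP.
have -> : nth 0 (e_args Es) j = 0 by rewrite nth_default //; apply: leq_trans (sim_args_le EsEt) hj.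
apply: (reach_mono (k := 2)) => //.
apply: reach_const; [fetch hc 0 | exact: sim_target_W_gt0 EsEt |].
apply: reach_jmp; [fetch hc 1 |].
by apply/reach_now/sim_rel_assign => //; exact: sim_W_gt0 EsEt.
Qed.

Lemma sim_add r s t : nth IHalt p (pc c1) = IAdd r s t -> sim_post c2 (step Es p c1).
Proof.
move=> e; have hc := block_at; have := regs_p pc1_lt; rewrite e /= in hc * => hregs.
have [hr0 hs ht] : [/\ r < R, s < R & t < R] by split; lia.
rewrite /sim_post /step pc1_lt e /=; case: ifP => // hv.
case: rel12 => _ hr _ _ _; apply: (reach_mono (k := 2)) => //.
apply: reach_add; [fetch hc 0 | rewrite /= (hr s) ?(hr t) //; exact: leq_trans hv (sim_W_le EsEt) |].
apply: reach_jmp; [fetch hc 1 |].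
by apply/reach_now; rewrite /= (hr s) ?(hr t) //; apply: sim_rel_assign.
Qed.

Lemma sim_sub r s t : nth IHalt p (pc c1) = ISub r s t -> sim_post c2 (step Es p c1).
Proof.
move=> e; have hc := block_at; have := regs_p pc1_lt; rewrite e /= in hc * => hregs.
have [hr0 hs ht] : [/\ r < R, s < R & t < R] by split; lia.
rewrite /sim_post /step pc1_lt e /=; case: ifP => // hv.
case: rel12 => _ hr _ _ _; apply: (reach_mono (k := 2)) => //.
apply: reach_sub; [fetch hc 0 | rewrite /= (hr s) ?(hr t) //; exact: leq_trans hv (sim_W_le EsEt) |].
apply: reach_jmp; [fetch hc 1 |].
by apply/reach_now; rewrite /= (hr s) ?(hr t) //; apply: sim_rel_assign.
Qed.

Lemma sim_mul r s t : nth IHalt p (pc c1) = IMul r s t -> sim_post c2 (step Es p c1).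
Proof.
move=> e; have hc := block_at; have := regs_p pc1_lt; rewrite e /= in hc * => hregs.
have [hr0 hs ht] : [/\ r < R, s < R & t < R] by split; lia.
rewrite /sim_post /step pc1_lt e /=; case: ifP => // hv.
case: rel12 => _ hr _ _ _; apply: (reach_mono (k := 2)) => //.
apply: reach_mul; [fetch hc 0 | rewrite /= (hr s) ?(hr t) //; exact: leq_trans hv (sim_W_le EsEt) |].
apply: reach_jmp; [fetch hc 1 |].
by apply/reach_now; rewrite /= (hr s) ?(hr t) //; apply: sim_rel_assign.
Qed.

Lemma sim_div r s t : nth IHalt p (pc c1) = IDiv r s t -> sim_post c2 (step Es p c1).
Proof.
move=> e; have hc := block_at; have := regs_p pc1_lt; rewrite e /= in hc * => hregs.
have [hr0 hs ht] : [/\ r < R, s < R & t < R] by split; lia.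
rewrite /sim_post /step pc1_lt e /=; case: ifP => // hv.
case: rel12 => _ hr _ _ _; apply: (reach_mono (k := 2)) => //.
apply: reach_div; [fetch hc 0 | rewrite /= (hr s) ?(hr t) //; exact: leq_trans hv (sim_W_le EsEt) |].
apply: reach_jmp; [fetch hc 1 |].
by apply/reach_now; rewrite /= (hr s) ?(hr t) //; apply: sim_rel_assign.
Qed.

Lemma sim_load r s : nth IHalt p (pc c1) = ILoad r s -> sim_post c2 (step Es p c1).
Proof.
move=> e; have hc := block_at; have := regs_p pc1_lt; rewrite e /= in hc * => hregs.
have [hr0 hs] : r < R /\ s < R by split; lia.
rewrite /sim_post /step pc1_lt e /=; case: ifP => // hm; case: ifP => // hv.
case: rel12 => _ hr _ _ [hm1 _]; apply: (reach_mono (k := 2)) => //.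
apply: reach_load; [fetch hc 0 | by rewrite /= hr //; exact: leq_trans hm (sim_M_le EsEt) |
  by rewrite /= hr // hm1 //; exact: leq_trans hv (sim_W_le EsEt) |].
apply: reach_jmp; [fetch hc 1 |].
by apply/reach_now; rewrite /= hr // hm1 //; apply: sim_rel_assign.
Qed.

Lemma sim_store r s : nth IHalt p (pc c1) = IStore r s -> sim_post c2 (step Es p c1).
Proof.
move=> e; have hc := block_at; have := regs_p pc1_lt; rewrite e /= in hc * => hregs.
have [hr0 hs] : r < R /\ s < R by split; lia.
rewrite /sim_post /step pc1_lt e /=; case: ifP => // /andP[_ hm].
case: rel12 => _ hr ha hb [hm1 hm2]; apply: (reach_mono (k := 2)) => //.
apply: reach_store; [fetch hc 0 | exact: sim_store_ok EsEt |
  by rewrite /= hr //; exact: leq_trans hm (sim_M_le EsEt) |].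
apply: reach_jmp; [fetch hc 1 |].
apply: reach_now; rewrite /= !hr //; split=> //=; first by rewrite (minn_idPl pc1_lt).
by split=> x hx /=; rewrite /upd; case: eqP => // ?; [exact: hm1 | lia | exact: hm2].
Qed.

Lemma sim_read_tail r s t v regs2 : nth IHalt p (pc c1) = IRead r s -> t < 7 ->
  r < R -> v < e_W Es ->
  nth IHalt (compile_instr R off (size p) F (pc c1) (IRead r s)) t = IConst r v ->
  nth IHalt (compile_instr R off (size p) F (pc c1) (IRead r s)) t.+1 =
    IJmp (off + blk * (pc c1).+1) ->
  (forall x, x < R + 3 -> regs2 x = regs c2 x) ->
  reach Et P 2 (Cfg (pc c2 + t) regs2 (glob c2))
    (sim_rel (Cfg (pc c1).+1 (upd (regs c1) r v) (glob c1))).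
Proof.
move=> e ht hr0 hv e1 e2 hregs2; have hc := block_at; rewrite e in hc.
apply: reach_const; [by rewrite (fetch_at hc (t := t)) ?e1 //=; lia |
  exact: leq_trans hv (sim_W_le EsEt) |].
apply: (reach_jmp (l := off + blk * (pc c1).+1)).
  by rewrite (fetch_at hc (t := t.+1)) ?e2 ?addnS.
by apply/reach_now/sim_rel_assign => // x hx /=; rewrite /upd; case: eqP => // _; exact: hregs2.
Qed.

Lemma sim_read r s : nth IHalt p (pc c1) = IRead r s -> sim_post c2 (step Es p c1).
Proof.
move=> e; have hc := block_at; have := regs_p pc1_lt; rewrite e /= in hc * => hregs.
have [hr0 hs] : r < R /\ s < R by split; lia.
rewrite /sim_post /step pc1_lt e /=; case ein: (e_input Es) => [w|] //.
rewrite (sim_input_e EsEt ein) size_nseq; set m := nth 0 (e_args Es) 0.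
case: rel12 => hpc hr ha hb _; rewrite (minn_idPl (ltnW pc1_lt)) in hpc.
have hm : regs c2 R = m by rewrite -(addn0 R) ha.
have hj := hr s hs; set j := regs c1 s in hj *.
have [j0|j_gt0] := posnP j.
  rewrite j0 /= (sim_W_gt0 EsEt); apply: (reach_mono (k := 3)) => //.
  apply: reach_jz; [fetch hc 0 |]; rewrite /= hj j0 /= (_ : _ + 4 = pc c2 + 4); last lia.
  by apply: (sim_read_tail (t := 4) e) => //; exact: sim_W_gt0 EsEt.
have sub_step : reach Et P 2 c2
    (eq (Cfg (pc c2 + 2) (upd (regs c2) (R + 3) (j - m)) (glob c2))).
  apply: reach_jz; [fetch hc 0 |]; rewrite /= hj (negbTE (lt0n_neq0 j_gt0)).
  apply: reach_sub; [fetch hc 1 | rewrite /= hj hm |].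
    by apply: leq_ltn_trans (leq_subr _ _) (leq_trans (hb s) (sim_W_le EsEt)).
  by apply: reach_now; rewrite /= hj hm addn2.
have regs3 x : x < R + 3 -> upd (regs c2) (R + 3) (j - m) x = regs c2 x.
  by rewrite /upd; case: eqP => // ->; rewrite ltnn.
case: (leqP j m) => jm.
  rewrite /= nth_nseq (_ : j.-1 < m); last lia.
  case: ifP => // hv; apply: (reach_mono (k := 2 + 3)) => //.
  apply: reach_trans; apply: reach_post sub_step => _ <-.
  apply: reach_jz; [fetch hc 2 |]; rewrite /= /upd eqxx /= (_ : j - m == 0); last by apply/eqP; lia.
  rewrite (_ : _ + 6 = pc c2 + 6); last lia.
  exact: (sim_read_tail (t := 6) e).
rewrite /= (sim_W_gt0 EsEt); apply: (reach_mono (k := 2 + 4)) => //.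
apply: reach_trans; apply: reach_post sub_step => _ <-.
have jm0 : (j - m == 0) = false by apply/eqP; lia.
apply: reach_jz; [fetch hc 2 |]; rewrite /= /upd eqxx /= jm0.
apply: reach_jmp; [fetch hc 3 |]; rewrite (_ : _ + 4 = pc c2 + 4); last lia.
by apply: (sim_read_tail (t := 4) e) => //; exact: sim_W_gt0 EsEt.
Qed.

Lemma sim_jz r l : nth IHalt p (pc c1) = IJz r l -> sim_post c2 (step Es p c1).
Proof.
move=> e; have hc := block_at; have := regs_p pc1_lt; rewrite e /= in hc * => hr0.
rewrite /sim_post /step pc1_lt e /=; apply: (reach_mono (k := 2)) => //.
case: (rel12) => _ hr _ _ _; apply: reach_jz; [fetch hc 0 |]; rewrite /= hr //.
case: eqP => _.
  by apply: reach_now; apply: sim_rel_goto.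
apply: reach_jmp; [fetch hc 1 |].
by apply: reach_now; have := sim_rel_goto (pc c1).+1; rewrite (minn_idPl pc1_lt).
Qed.

Lemma sim_jmp l : nth IHalt p (pc c1) = IJmp l -> sim_post c2 (step Es p c1).
Proof.
move=> e; have hc := block_at; rewrite e in hc.
rewrite /sim_post /step pc1_lt e /=; apply: (reach_mono (k := 1)) => //.
by apply: reach_jmp; [fetch hc 0 | apply: reach_now; apply: sim_rel_goto].
Qed.

Lemma sim_out r s : nth IHalt p (pc c1) = IOut r s -> sim_post c2 (step Es p c1).
Proof.
move=> e; have hc := block_at; rewrite e in hc.
rewrite /sim_post /step pc1_lt e /=; case: ifP => // _; apply: (reach_mono (k := 1)) => //.
by apply: reach_jmp; [fetch hc 0 | apply: reach_now; case: rel12].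
Qed.

Lemma sim_halt : nth IHalt p (pc c1) = IHalt -> sim_post c2 (step Es p c1).
Proof.
move=> e; have hc := block_at; rewrite e in hc.
rewrite /sim_post /step pc1_lt e /=; apply: (reach_mono (k := 1)) => //.
by apply: reach_jmp; [fetch hc 0 | apply: reach_now; case: rel12].
Qed.
End Block.

Lemma sim_step c1 c2 : sim_rel c1 c2 -> sim_post c2 (step Es p c1).
Proof.
move=> rel12; case: (ltnP (pc c1) (size p)) => hk; last first.
  rewrite /sim_post /step ltnNge hk /=; apply: reach_now.
  by case: rel12 => -> *; rewrite /exit_pc (minn_idPr hk).
case e: (nth IHalt p (pc c1)) => [r v|r j|r s t|r s t|r s t|r s t|r s|r s|r s|r l|l|r s|].
- exact: sim_const e.
- exact: sim_arg e.
- exact: sim_add e.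
- exact: sim_sub e.
- exact: sim_mul e.
- exact: sim_div e.
- exact: sim_load e.
- exact: sim_store e.
- exact: sim_read e.
- exact: sim_jz e.
- exact: sim_jmp e.
- exact: sim_out e.
- exact: sim_halt e.
Qed.

Lemma sim_run fuel c1 c2 cf : e_out Es = false -> sim_rel c1 c2 -> run Es p fuel c1 = Some cf ->
  reach Et P (blk * fuel) c2 (fun c2' => pc c2' = exit_pc /\ mem_agree (glob cf) c2').
Proof.
move=> no_out; elim: fuel c1 c2 => [|f IH] c1 c2 rel12 //=.
have := sim_step rel12; rewrite /sim_post.
case e: (step Es p c1) => [|c'|c' o] //.
  by move=> hr [<-]; apply: reach_mono hr; rewrite mulnS leq_addr.
rewrite (step_no_out no_out e) => hr hrun.
by rewrite mulnS; apply: reach_trans; apply: reach_post hr => c3 /IH; apply.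
Qed.

Lemma sim_seg d c1 c2 r : e_store Es = false -> sim_rel c1 c2 -> seg Es p d c1 = Some r ->
  reach Et P (blk * d) c2 (fun c2' =>
    pc c2' = (if r is Some _ then F else exit_pc) /\ mem_agree (glob c1) c2').
Proof.
move=> no_store; elim: d c1 c2 => [|d IH] c1 c2 rel12 //=.
have := sim_step rel12; rewrite /sim_post.
case e: (step Es p c1) => [|c'|c' [o|]] //.
- by rewrite (step_halted e) => hr [<-]; apply: reach_mono hr; rewrite mulnS leq_addr.
- by rewrite (step_no_store no_store e) => hr [<-]; apply: reach_mono hr; rewrite mulnS leq_addr.
move=> hr hseg; rewrite -(step_no_store no_store e) mulnS.
by apply: reach_trans; apply: reach_post hr => c3 /IH; apply.
Qed.
End Simulation.

Section Phase.
Variables (Es Et : env) (P p : program) (R a F K : nat) (c0 : config) (g : nat -> nat).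
Hypothesis EsEt : simulable Es Et.
Hypothesis code_phase : code_at P a (clear_regs R ++ compile R (a + R) F p).
Hypothesis regs_p : forall k, k < size p -> instr_reg (nth IHalt p k) < R.
Hypothesis setup : reach Et P K c0 (fun c1 => [/\ pc c1 = a,
  (forall j, j < 3 -> regs c1 (R + j) = nth 0 (e_args Es) j) & glob c1 = glob c0]).
Hypothesis low_mem : forall y, y < e_M Es -> glob c0 y = g y.

Lemma phase_start : reach Et P (K + R) c0 (sim_rel Es p R (a + R) (glob c0) (start g)).
Proof.
apply: reach_trans; apply: reach_post setup => c1 [pc1 args1 glob1].
have := clear_regs_spec (code_at_catl code_phase) pc1 (sim_target_W_gt0 EsEt).
apply: reach_post => c2 [pc2 zero2 keep2 glob2]; split=> //=.
- by rewrite pc2 min0n muln0 addn0.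
- by move=> j hj; rewrite keep2 ?leq_addr // args1.
- by move=> _; exact: sim_W_gt0 EsEt.
- by split=> x hx; rewrite glob2 glob1 // low_mem.
Qed.

Let code_sim : code_at P (a + R) (compile R (a + R) F p).
Proof. by have := code_at_catr code_phase; rewrite size_mkseq. Qed.

Lemma phase_run fuel cf : e_out Es = false -> run Es p fuel (start g) = Some cf ->
  reach Et P (K + R + blk * fuel) c0 (fun c' =>
    pc c' = a + R + blk * size p /\ mem_agree Es (glob c0) (glob cf) c').
Proof.
move=> no_out hrun; apply: reach_trans; apply: reach_post phase_start => c1 rel1.
by have := sim_run code_sim regs_p EsEt no_out rel1 hrun; apply.
Qed.

Lemma phase_seg d r : e_store Es = false -> seg Es p d (start g) = Some r ->
  reach Et P (K + R + blk * d) c0 (fun c' =>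
    pc c' = (if r is Some _ then F else a + R + blk * size p) /\ mem_agree Es (glob c0) g c').
Proof.
move=> no_store hseg; apply: reach_trans; apply: reach_post phase_start => c1 rel1.
by have := sim_seg code_sim regs_p EsEt no_store rel1 hseg; apply.
Qed.
End Phase.

(** * The prefix-U1 structure built from an L1 structure *)

Lemma exp_cell_bound n c B : (2 * n + 2) ^ c <= (n + 2) ^ (2 * c + B + 3).
Proof.
apply: leq_trans (_ : (n + 2) ^ (2 * c) <= _); last by apply: leq_pexp2l; lia.
rewrite expnM; case: c => // c; rewrite leq_exp2r //; nia.
Qed.

Lemma exp_mem_bound n c B : B * (2 * n + 1) + 2 * n + 4 < (n + 2) ^ (2 * c + B + 3).
Proof.
apply: leq_trans (_ : (n + 2) ^ (B + 3) <= _); last by apply: leq_pexp2l; lia.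
have n2_gt1 : 1 < n + 2 by rewrite addn2.
have := ltn_expl B n2_gt1; rewrite expnD (expnS _ 2) (expnS _ 1) expn1; nia.
Qed.

Lemma enum_correct_first_seg L enm_p B c w g : enum_correct L enm_p B c w g ->
  exists r, seg (enum_env B c (size w)) enm_p B (start g) = Some r /\
            (r = None <-> ~ has_infix L w).
Proof.
case=> [[|k] [outs [//= henum [_ hiff]]]].
case: (seg _ _ _ _) henum => // r henum; exists r; split=> //.
case: r henum => [[o c'] | [eo]]; last first.
  split=> // _ [i [j [h1 h2 h3 h4]]].
  by have := (hiff i j).2 (conj h1 (conj h2 (conj h3 h4))); rewrite -eo.
case: (enum _ _ _ _ _) => // l [eo]; split=> // no_infix.
have : o \in outs by rewrite -eo mem_head.
by case: o {eo} => i j /hiff [? [? [? ?]]]; case: no_infix; exists i, j.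
Qed.

Section Reduction.
Variables (pre_p upd_p enm_p : program) (B c : nat).

(* The simulated programs use the registers below nreg; nreg, nreg + 1 and
   nreg + 2 hold their arguments, nreg + 3 and nreg + 4 are scratch. *)
Definition nreg := maxn (prog_regs pre_p) (maxn (prog_regs upd_p) (prog_regs enm_p)).

Lemma nreg_pre k : k < size pre_p -> instr_reg (nth IHalt pre_p k) < nreg.
Proof. by move/instr_reg_lt; rewrite /nreg; lia. Qed.

Lemma nreg_upd k : k < size upd_p -> instr_reg (nth IHalt upd_p k) < nreg.
Proof. by move/instr_reg_lt; rewrite /nreg; lia. Qed.

Lemma nreg_enm k : k < size enm_p -> instr_reg (nth IHalt enm_p k) < nreg.
Proof. by move/instr_reg_lt; rewrite /nreg; lia. Qed.

Definition u1_exp := 2 * c + B + 3.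
Local Notation tenv n i := (u1env u1_exp n i).

Lemma u1_cell_lt n v : v <= memM B (2 * n) + 2 * n + 4 -> v < (n + 2) ^ u1_exp.
Proof. by move=> hv; apply: leq_ltn_trans hv (exp_mem_bound n c B). Qed.

Lemma cellW_le n : cellW c (2 * n) <= (n + 2) ^ u1_exp.
Proof. exact: exp_cell_bound. Qed.

Lemma memM_le n : memM B (2 * n) <= (n + 2) ^ u1_exp.
Proof. by apply: ltnW; apply: u1_cell_lt; rewrite -addnA leq_addr. Qed.

Definition upd_setup d x := [:: IArg (nreg + 3) 0; IAdd (nreg + 0) (nreg + 3) (nreg + 3);
  IArg (nreg + 4) 1; IAdd (nreg + 1) (nreg + 4) (nreg + 4); IConst (nreg + 3) d;
  ISub (nreg + 1) (nreg + 1) (nreg + 3); IConst (nreg + 2) (code x)].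

Definition enum_setup := [:: IArg (nreg + 3) 0; IAdd (nreg + 0) (nreg + 3) (nreg + 3);
  IConst (nreg + 1) 0; IConst (nreg + 2) 0].

Definition bit_addr := [:: IArg (nreg + 3) 0; IAdd (nreg + 3) (nreg + 3) (nreg + 3);
  IConst (nreg + 4) 1; IAdd (nreg + 3) (nreg + 3) (nreg + 4); IConst (nreg + 4) B;
  IMul (nreg + 3) (nreg + 4) (nreg + 3); IArg (nreg + 4) 1; IAdd (nreg + 3) (nreg + 3) (nreg + 4)].

Local Ltac fetch hc hpc t := rewrite (fetch_at hc (t := t)) //= hpc; lia.
Local Ltac bound := apply: u1_cell_lt => /=; rewrite /memM /upd ?eqn_add2l /=; nia.

Lemma upd_setup_spec P a n i d x c0 : code_at P a (upd_setup d x) -> pc c0 = a -> i <= n -> d <= 1 ->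
  reach (tenv n i) P 7 c0 (fun c1 => [/\ pc c1 = a + 7,
    (forall j, j < 3 -> regs c1 (nreg + j) = nth 0 [:: 2 * n; 2 * i - d; code x] j)
    & glob c1 = glob c0]).
Proof.
move=> hc hpc hi hd; have hx : code x <= 3 by case: x {hc}.
apply: reach_arg; [fetch hc hpc 0 | bound |].
apply: reach_add; [fetch hc hpc 1 | bound |].
apply: reach_arg; [fetch hc hpc 2 | bound |].
apply: reach_add; [fetch hc hpc 3 | bound |].
apply: reach_const; [fetch hc hpc 4 | bound |].
apply: reach_sub; [fetch hc hpc 5 | bound |].
apply: reach_const; [fetch hc hpc 6 | bound |].
apply: reach_now; split=> //=; first by rewrite hpc; lia.
by case=> [|[|[|j]]] // _ /=; rewrite /upd ?eqn_add2l /=; lia.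
Qed.

Lemma enum_setup_spec P a n i c0 : code_at P a enum_setup -> pc c0 = a ->
  reach (tenv n i) P 4 c0 (fun c1 => [/\ pc c1 = a + 4,
    (forall j, j < 3 -> regs c1 (nreg + j) = nth 0 [:: 2 * n] j) & glob c1 = glob c0]).
Proof.
move=> hc hpc.
apply: reach_arg; [fetch hc hpc 0 | bound |].
apply: reach_add; [fetch hc hpc 1 | bound |].
apply: reach_const; [fetch hc hpc 2 | bound |].
apply: reach_const; [fetch hc hpc 3 | bound |].
apply: reach_now; split=> //=; first by rewrite hpc; lia.
by case=> [|[|[|j]]] // _ /=; rewrite /upd ?eqn_add2l /=; lia.
Qed.

Lemma bit_addr_spec P a n i c0 : code_at P a bit_addr -> pc c0 = a -> i <= n ->
  reach (tenv n i) P 8 c0 (fun c1 => [/\ pc c1 = a + 8,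
    regs c1 (nreg + 3) = memM B (2 * n) + i & glob c1 = glob c0]).
Proof.
move=> hc hpc hi.
apply: reach_arg; [fetch hc hpc 0 | bound |].
apply: reach_add; [fetch hc hpc 1 | bound |].
apply: reach_const; [fetch hc hpc 2 | bound |].
apply: reach_add; [fetch hc hpc 3 | bound |].
apply: reach_const; [fetch hc hpc 4 | bound |].
apply: reach_mul; [fetch hc hpc 5 | bound |].
apply: reach_arg; [fetch hc hpc 6 | bound |].
apply: reach_add; [fetch hc hpc 7 | bound |].
apply: reach_now; split=> //=; first by rewrite hpc; lia.
by rewrite /upd /memM ?eqn_add2l /=; nia.
Qed.

Lemma simulable_u1 Es n i : e_W Es = cellW c (2 * n) -> e_M Es = memM B (2 * n) ->
  size (e_args Es) <= 3 ->
  (forall w, e_input Es = Some w -> w = nseq (nth 0 (e_args Es) 0) (code Le)) ->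
  simulable Es (tenv n i).
Proof.
move=> hW hM ha hi; split=> //; rewrite ?hW ?hM.
- exact: cellW_le.
- by rewrite /cellW expn_gt0 addn2.
- exact: memM_le.
Qed.

Definition upd_phase a d x := upd_setup d x ++ clear_regs nreg ++ compile nreg (a + 7 + nreg) 0 upd_p.
Definition enum_phase a F := enum_setup ++ clear_regs nreg ++ compile nreg (a + 4 + nreg) F enm_p.
Definition pre_phase := enum_setup ++ clear_regs nreg ++ compile nreg (0 + 4 + nreg) 0 pre_p.
Definition upd_phase_size := 7 + nreg + blk * size upd_p.

Lemma size_upd_phase a d x : size (upd_phase a d x) = upd_phase_size.
Proof. by rewrite /upd_phase !size_cat size_mkseq size_compile. Qed.

Lemma upd_phase_spec P a n i d x g cf c0 :
  code_at P a (upd_phase a d x) -> pc c0 = a -> i <= n -> d <= 1 ->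
  (forall y, y < memM B (2 * n) -> glob c0 y = g y) ->
  run (upd_env B c (2 * n) (2 * i - d) x) upd_p B (start g) = Some cf ->
  reach (tenv n i) P (7 + nreg + blk * B) c0 (fun c' =>
    pc c' = a + 7 + nreg + blk * size upd_p /\
    mem_agree (upd_env B c (2 * n) (2 * i - d) x) (glob c0) (glob cf) c').
Proof.
move=> hc hpc hi hd hg hrun.
have hcr := code_at_catr hc; rewrite [size _]/= in hcr.
apply: (phase_run (Es := upd_env B c (2 * n) (2 * i - d) x) _ hcr nreg_upd _ hg _ hrun) => //.
- exact: simulable_u1.
- exact: reach_post (upd_setup_spec (code_at_catl hc) hpc hi hd) => c1 h.
Qed.

Lemma enum_phase_spec P a F n i g r c0 : code_at P a (enum_phase a F) -> pc c0 = a ->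
  (forall y, y < memM B (2 * n) -> glob c0 y = g y) ->
  seg (enum_env B c (2 * n)) enm_p B (start g) = Some r ->
  reach (tenv n i) P (4 + nreg + blk * B) c0 (fun c' =>
    pc c' = (if r is Some _ then F else a + 4 + nreg + blk * size enm_p) /\
    mem_agree (enum_env B c (2 * n)) (glob c0) g c').
Proof.
move=> hc hpc hg hseg.
have hcr := code_at_catr hc; rewrite [size _]/= in hcr.
apply: (phase_seg (Es := enum_env B c (2 * n)) _ hcr nreg_enm _ hg _ hseg) => //.
- exact: simulable_u1.
- exact: reach_post (enum_setup_spec n i (code_at_catl hc) hpc) => c1 h.
Qed.

Lemma pre_phase_spec P n fuel cf : code_at P 0 pre_phase ->
  run (pre_env B c (set_word n (fun _ => false))) pre_p fuel (start zero_mem) = Some cf ->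
  reach (tenv n 0) P (4 + nreg + blk * fuel) (start zero_mem) (fun c' =>
    pc c' = 0 + 4 + nreg + blk * size pre_p /\
    mem_agree (pre_env B c (set_word n (fun _ => false))) zero_mem (glob cf) c').
Proof.
move=> hc hrun.
have hcr := code_at_catr hc; rewrite [size _]/= in hcr.
apply: (phase_run (Es := pre_env B c (set_word n (fun _ => false))) _ hcr nreg_pre _ _ _ hrun) => //.
- apply: simulable_u1; rewrite /= ?size_set_word //.
  by move=> w [<-]; rewrite set_word_pred0 map_nseq.
- have := enum_setup_spec n 0 (code_at_catl hc) (erefl : pc (start zero_mem) = 0).
  by apply: reach_post => c1 [h1 h2 h3]; split=> // j hj; rewrite h2 /= ?size_set_word.
Qed.

Definition valid_state w g := forall us, all (fun u => (0 < u.1) && (u.1 <= size w)) us ->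
  trace_ok L1 upd_p enm_p B c w g us.

Lemma valid_state_enum w g : valid_state w g -> enum_correct L1 enm_p B c w g.
Proof. by case/(_ [::] isT). Qed.

Lemma valid_state_upd w g i x : valid_state w g -> 0 < i <= size w ->
  exists cf, run (upd_env B c (size w) i x) upd_p B (start g) = Some cf /\
             valid_state (set_nth La w i.-1 x) (glob cf).
Proof.
move=> h hi; case: (h [:: (i, x)]); first by rewrite /= hi.
move=> _ [cf [hr _]]; exists cf; split=> // us hus.
have hsz : size (set_nth La w i.-1 x) = size w by rewrite size_set_nth; apply/maxn_idPr; lia.
case: (h ((i, x) :: us)); first by rewrite /= hi -hsz.
by move=> _ [cf' []]; rewrite hr => -[<-].
Qed.

Definition represents n (S : nat -> bool) (G : nat -> nat) := exists g,
  [/\ valid_state (set_word n S) g, (forall y, y < memM B (2 * n) -> G y = g y) &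
      (forall x, 0 < x <= n -> G (memM B (2 * n) + x) = S x)].

Lemma represents_eq n S1 S2 G : S1 =1 S2 -> represents n S1 G -> represents n S2 G.
Proof.
move=> hS [g [h1 h2 h3]]; exists g; split=> // [|x hx]; last by rewrite h3 // hS.
by rewrite -(eq_set_word n hS).
Qed.

Definition op_steps := 64 + 4 * nreg + 32 * B.

Definition set_prog (b : bool) := upd_phase 0 0 (bit_letter b) ++ bit_addr ++
  [:: IConst (nreg + 4) b; IStore (nreg + 3) (nreg + 4); IHalt].

Lemma set_prog_spec n S G i b : represents n S G -> 0 < i <= n ->
  exists cf, run (tenv n i) (set_prog b) op_steps (start G) = Some cf /\
             represents n [eta S with i |-> b] (glob cf).
Proof.
move=> [g [hds hlow hbits]] /andP[i_gt0 le_in].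
have hpos : 0 < 2 * i <= size (set_word n S) by rewrite size_set_word; lia.
have [cf1 [hrun1 hds1]] := valid_state_upd (bit_letter b) hds hpos.
rewrite size_set_word -(subn0 (2 * i)) in hrun1; rewrite set_word_update in hds1; last by rewrite i_gt0.
have hc : code_at (set_prog b) 0 (set_prog b) by [].
apply: (@run_of_reach _ _ ((7 + nreg + blk * B) + (8 + 2))); last by rewrite /op_steps /blk; lia.
apply: reach_trans.
have := upd_phase_spec (code_at_catl hc) (erefl : pc (start G) = 0) le_in (leq0n 1) hlow hrun1.
apply: reach_post => c1 [pc1 [low1 high1]].
have hc2 := code_at_catr hc; rewrite size_upd_phase in hc2.
apply: reach_trans.
have pc1' : pc c1 = 0 + upd_phase_size by rewrite pc1 /upd_phase_size.
apply: reach_post (bit_addr_spec (code_at_catl hc2) pc1' le_in) => c2 [pc2 reg2 glob2].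
have hc3 := code_at_catr hc2; rewrite [size _]/= in hc3.
apply: reach_const; first by rewrite (fetch_at hc3 (t := 0)) //= pc2 addn0.
  by apply: u1_cell_lt; apply: leq_trans (leq_b1 b) _; lia.
apply: reach_store => //; first by rewrite (fetch_at hc3 (t := 1)) //= pc2; lia.
  by rewrite /= /upd ?eqn_add2l /= reg2; apply: u1_cell_lt; lia.
apply: reach_now; split; first by rewrite (fetch_at hc3 (t := 2)) //= pc2; lia.
exists (glob cf1); split => //.
- move=> y hy /=; rewrite /upd ?eqn_add2l /= reg2.
  by case: eqP => [?|_]; [lia | rewrite glob2 low1].
- move=> x hx /=; rewrite /upd ?eqn_add2l /= reg2.
  case: eqP => [e|ne]; first by rewrite (_ : x == i) //; apply/eqP; lia.
  rewrite (_ : (x == i) = false); last by apply/eqP => e; apply: ne; rewrite e.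
  by rewrite glob2 high1 /=; [exact: hbits | rewrite /memM; lia].
Qed.

Definition mem_prog := bit_addr ++ [:: ILoad 0 (nreg + 3); IHalt].

Lemma mem_prog_spec n S G i : represents n S G -> 0 < i <= n ->
  exists cf, run (tenv n i) mem_prog op_steps (start G) = Some cf /\ answer cf = S i /\ glob cf = G.
Proof.
move=> [g [_ _ hbits]] /andP[i_gt0 le_in].
have hc : code_at mem_prog 0 mem_prog by [].
apply: (@run_of_reach _ _ (8 + 1)); last by rewrite /op_steps; lia.
apply: reach_trans.
have := bit_addr_spec (code_at_catl hc) (erefl : pc (start G) = 0) le_in.
apply: reach_post => c2 [pc2 reg2 glob2].
have hc3 := code_at_catr hc; rewrite [size _]/= in hc3.
have hbit : glob c2 (regs c2 (nreg + 3)) = S i by rewrite glob2 reg2 /= hbits ?i_gt0.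
apply: reach_load; first by rewrite (fetch_at hc3 (t := 0)) //= pc2.
    by rewrite reg2; apply: u1_cell_lt; lia.
  by rewrite hbit; apply: u1_cell_lt; apply: leq_trans (leq_b1 _) _; lia.
apply: reach_now; split; first by rewrite (fetch_at hc3 (t := 1)) //= pc2.
by split=> //; rewrite /answer /= /upd eqxx hbit; case: (S i).
Qed.

Definition restore_answer a (v : bool) := upd_phase a 1 Le ++ [:: IConst 0 v; IHalt].

Lemma restore_answer_spec P a v n (S : nat -> bool) i g c0 cf : code_at P a (restore_answer a v) ->
  pc c0 = a -> 0 < i <= n ->
  (forall y, y < memM B (2 * n) -> glob c0 y = g y) ->
  (forall x, 0 < x <= n -> glob c0 (memM B (2 * n) + x) = S x) ->
  run (upd_env B c (2 * n) (2 * i - 1) Le) upd_p B (start g) = Some cf ->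
  valid_state (set_word n S) (glob cf) ->
  reach (tenv n i) P (7 + nreg + blk * B + 1) c0
    (fun c' => nth IHalt P (pc c') = IHalt /\ answer c' = v /\ represents n S (glob c')).
Proof.
move=> hc hpc /andP[_ le_in] hlow hbits hrun hds.
apply: reach_trans.
have := upd_phase_spec (code_at_catl hc) hpc le_in (leqnn 1) hlow hrun.
apply: reach_post => c1 [pc1 [low1 high1]].
have hct := code_at_catr hc; rewrite size_upd_phase in hct.
apply: reach_const; first by rewrite (fetch_at hct (t := 0)) //= pc1 /upd_phase_size; lia.
  by apply: u1_cell_lt; apply: leq_trans (leq_b1 v) _; lia.
apply: reach_now; split; first by rewrite (fetch_at hct (t := 1)) //= pc1 /upd_phase_size; lia.
split; first by rewrite /answer /= /upd eqxx; case: (v).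
by exists (glob cf); split=> // x hx /=; rewrite high1 ?hbits //= /memM; lia.
Qed.

Definition enum_at := upd_phase_size.
Definition restore_yes_at := enum_at + 4 + nreg + blk * size enm_p.
Definition restore_no_at := restore_yes_at + upd_phase_size + 2.

(* Write a at position 2i-1, run the enumeration until its first output or
   its end, erase the a, and answer yes iff there was no output. *)
Definition prefix_prog := upd_phase 0 1 La ++ enum_phase enum_at restore_no_at ++
  restore_answer restore_yes_at true ++ restore_answer restore_no_at false.

Lemma valid_state_probe n S g i : valid_state (set_word n S) g -> 0 < i <= n ->
  exists cf1 r cf2,
    [/\ run (upd_env B c (2 * n) (2 * i - 1) La) upd_p B (start g) = Some cf1,
        seg (enum_env B c (2 * n)) enm_p B (start (glob cf1)) = Some r,
        r = None <-> (forall x, 1 <= x <= n -> S x -> i <= x),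
        run (upd_env B c (2 * n) (2 * i - 1) Le) upd_p B (start (glob cf1)) = Some cf2
      & valid_state (set_word n S) (glob cf2)].
Proof.
move=> hds hi; have /andP[i_gt0 le_in] := hi.
have hpos : 0 < 2 * i - 1 <= size (set_word n S) by rewrite size_set_word; lia.
have [cf1 [hrun1 hds1]] := valid_state_upd La hds hpos.
rewrite size_set_word in hrun1; rewrite (_ : (2 * i - 1).-1 = (2 * i).-2) in hds1; last lia.
have hsize : size (set_nth La (set_word n S) (2 * i).-2 La) = 2 * n.
  by rewrite size_set_nth size_set_word; apply/maxn_idPr; lia.
have [r [hseg hr]] := enum_correct_first_seg (valid_state_enum hds1); rewrite hsize in hseg.
have hpos2 : 0 < 2 * i - 1 <= size (set_nth La (set_word n S) (2 * i).-2 La) by rewrite hsize; lia.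
have [cf2 [hrun2 hds2]] := valid_state_upd Le hds1 hpos2.
rewrite hsize in hrun2.
rewrite (_ : (2 * i - 1).-1 = (2 * i).-2) ?set_word_probe_restore // in hds2; last lia.
exists cf1, r, cf2; split=> //; rewrite hr probe_has_infix //; split.
  move=> none x /andP[x_gt0 _] Sx; rewrite leqNgt; apply/negP => lt_xi.
  by apply: none; exists x; rewrite ?x_gt0.
by move=> all [x /andP[x_gt0 lt_xi] Sx]; have := all x; rewrite x_gt0 Sx; lia.
Qed.

Lemma prefix_prog_spec n S G i : represents n S G -> 0 < i <= n ->
  exists cf, run (tenv n i) prefix_prog op_steps (start G) = Some cf /\
    (answer cf <-> forall x, 1 <= x <= n -> S x -> i <= x) /\ represents n S (glob cf).
Proof.
move=> [g [hds hlow hbits]] hi; have /andP[_ le_in] := hi.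
have [cf1 [r [cf2 [hrun1 hseg hans hrun2 hds2]]]] := valid_state_probe hds hi.
have hc : code_at prefix_prog 0 prefix_prog by [].
have hcE := code_at_catr hc; rewrite size_upd_phase add0n in hcE.
have hcR := code_at_catr hcE.
rewrite (_ : _ + size _ = restore_yes_at) in hcR; last first.
  by rewrite /enum_phase !size_cat size_mkseq size_compile /restore_yes_at /enum_at /=; lia.
have hcN := code_at_catr hcR.
rewrite (_ : _ + size _ = restore_no_at) in hcN; last first.
  by rewrite size_cat size_upd_phase /restore_no_at /=; lia.
apply: (@run_of_reach _ _ ((7 + nreg + blk * B) + ((4 + nreg + blk * B) + (7 + nreg + blk * B + 1)))).
  apply: reach_trans.
  have := upd_phase_spec (code_at_catl hc) (erefl : pc (start G) = 0) le_in (leqnn 1) hlow hrun1.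
  apply: reach_post => c1 [pc1 [low1 high1]]; apply: reach_trans.
  apply: reach_post (enum_phase_spec i (code_at_catl hcE) pc1 low1 hseg) => c2 [pc2 [low2 high2]].
  have bits2 x : 0 < x <= n -> glob c2 (memM B (2 * n) + x) = S x.
    by move=> hx; rewrite high2 ?high1 /= ?hbits // /memM; lia.
  case: r hseg hans pc2 => [o|] _ hans pc2.
    apply: reach_post (restore_answer_spec hcN pc2 hi low2 bits2 hrun2 hds2).
    move=> c3 [halt3 [ans3 rep3]]; do !split=> //; rewrite ans3 // => all.
    by have := (proj2 hans) all.
  apply: reach_post (restore_answer_spec (code_at_catl hcR) pc2 hi low2 bits2 hrun2 hds2).
  by move=> c3 [halt3 [ans3 rep3]]; do !split=> //; rewrite ans3 => _; apply/hans.
by rewrite /op_steps /blk; lia.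
Qed.

Definition init_prog := pre_phase ++ [:: IHalt].

Lemma init_prog_spec n cf :
  run (pre_env B c (set_word n (fun _ => false))) pre_p (B * (2 * n + 1)) (start zero_mem) = Some cf ->
  valid_state (set_word n (fun _ => false)) (glob cf) ->
  exists cf0, halts (tenv n 0) init_prog (start zero_mem) cf0 /\
              represents n (fun _ => false) (glob cf0).
Proof.
move=> hrun hds.
have hc : code_at init_prog 0 init_prog by [].
have hcr := code_at_catr hc.
rewrite (_ : _ + size _ = 0 + 4 + nreg + blk * size pre_p) in hcr; last first.
  by rewrite /pre_phase !size_cat size_mkseq size_compile.
pose K := 4 + nreg + blk * (B * (2 * n + 1)).
have [cf0 [hr hrep]] : exists cf0, run (tenv n 0) init_prog K.+1 (start zero_mem) = Some cf0 /\
    represents n (fun _ => false) (glob cf0).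
  apply: (run_of_reach _ (ltnSn K)).
  apply: reach_post (pre_phase_spec (code_at_catl hc) hrun) => c1 [pc1 [low1 high1]]; split.
    by rewrite (fetch_at hcr (t := 0)) //= pc1 addn0.
  exists (glob cf); split=> // [y hy | x hx]; first by apply: low1; rewrite /= size_set_word.
  by rewrite high1 //= size_set_word /memM; lia.
by exists cf0; split=> //; exists K.+1.
Qed.

Definition u1_of_ds := U1DS init_prog mem_prog (set_prog true) (set_prog false) prefix_prog.

Lemma u1_trace_represents n ops : forall S G, represents n S G ->
  all (fun o => (1 <= u1arg o) && (u1arg o <= n)) ops ->
  u1_trace u1_of_ds u1_exp op_steps n S G ops.
Proof.
elim: ops => [|o ops IH] S G hrep // /andP[ho hops].
case: o ho => i ho.
- have [cf [hr [ha hg]]] := mem_prog_spec hrep ho.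
  by exists cf; split=> //; split=> //; rewrite hg; exact: IH.
- have [cf [hr hrep']] := set_prog_spec true hrep ho.
  (* [eta S with i |-> true] is convertible to fun x => (x == i) || S x. *)
  by exists cf; split=> //; apply: IH.
- have [cf [hr hrep']] := set_prog_spec false hrep ho.
  exists cf; split=> //; apply: IH => //; apply: (represents_eq _ hrep') => y /=.
  by case: (y == i).
- have [cf [hr [ha hrep']]] := prefix_prog_spec hrep ho.
  by exists cf; split=> //; split=> //; exact: IH.
Qed.
End Reduction.

Theorem claim7p2 : prefixU1_hypothesis -> ~ tractable L1.
Proof.
move=> hU [pre_p [upd_p [enm_p [B [c HT]]]]]; apply: hU.
exists (u1_of_ds pre_p upd_p enm_p B), (u1_exp B c), (op_steps pre_p upd_p enm_p B) => n.
have [cf [hrun hds]] := HT (set_word n (fun _ => false)); rewrite size_set_word in hrun.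
have [cf0 [halt0 hrep0]] := init_prog_spec hrun hds.
by exists cf0; split=> // ops hops; apply: u1_trace_represents.
Qed.
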